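(* Let $X$ be a random variable taking values in a set $\mathcal{X}$, let $Y \in [0,1]$ be a target outcome and let $\hat{Y} \in [0,1]$ be an expert prediction, all jointly distributed. Let $\mathcal{F}$ be a class of functions $\mathcal{X} \to [0,1]$, let $\alpha \ge 0$, and let $S_1, \dots, S_K \subseteq \mathcal{X}$ ($K \ge 1$) be an $\alpha$-multicalibrated partition with respect to $\mathcal{F}$ and $Y$. Let the random variable $J(X) \in [K]$ be defined by $J(X) = k$ iff $X \in S_k$. Define $\gamma^*, \beta^* \in \mathbb{R}^K$ by $$\gamma^*, \beta^* \in \arg\min_{\gamma \in \mathbb{R}^K, \beta \in \mathbb{R}^K} \mathbb{E}\left[\left(Y - \gamma_{J(X)} - \beta_{J(X)} \hat{Y}\right)^2\right].$$ Then for every $f \in \mathcal{F}$ and every $k \in [K]$, $$\mathbb{E}_k\left[\left(Y - \gamma^*_k - \beta^*_k \hat{Y}\right)^2\right] + 4\,\mathrm{Cov}_k(Y, \hat{Y})^2 \le \mathbb{E}_k\left[(Y - f(X))^2\right] + 2\alpha.$$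
   Context: For a subset $S \subseteq \mathcal{X}$ (with $\mathbb{P}(X \in S) > 0$), $\mathbb{E}_S, \mathrm{Var}_S, \mathrm{Cov}_S$ denote expectation, variance and covariance conditional on the event $\{X \in S\}$; $\mathbb{E}_k, \mathrm{Var}_k, \mathrm{Cov}_k$ denote these conditional on $\{X \in S_k\}$. A set $S \subseteq \mathcal{X}$ is $\alpha$-indistinguishable with respect to a function class $\mathcal{F}$ and target $Y$ if $|\mathrm{Cov}(f(X), Y \mid X \in S)| \le \alpha$ for all $f \in \mathcal{F}$. Sets $S_1, \dots, S_K$ form an $\alpha$-multicalibrated partition with respect to $\mathcal{F}$ and $Y$ if they partition $\mathcal{X}$ and each $S_k$ is $\alpha$-indistinguishable with respect to $\mathcal{F}$ and $Y$. *)

From HB Require Import structures.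
From mathcomp Require Import all_boot all_order all_algebra.
From mathcomp Require Import all_classical all_reals all_analysis.
Set Implicit Arguments. Unset Strict Implicit. Unset Printing Implicit Defensive.
Import Order.TTheory GRing.Theory Num.Theory.
Local Open Scope classical_set_scope.
Local Open Scope ring_scope.

Section Defs.
Context (R : realType) (d : measure_display) (T : measurableType d)
        (P : probability T R).

Definition expect (Z : T -> R) : R := Rintegral P setT Z.

(* Conditional expectation given the event A (assumed P A > 0):
   E_A[Z] = E[Z 1_A] / P(A). *)
Definition condE (A : set T) (Z : T -> R) : R :=
  Rintegral P A Z / fine (P A).

Definition condCov (A : set T) (U V : T -> R) : R :=
  condE A (fun w => (U w - condE A U) * (V w - condE A V)).

Context (d' : measure_display) (Xs : measurableType d') (X : T -> Xs).

Definition indistinguishable (F : set (Xs -> R)) (Y : T -> R) (alpha : R)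
  (S : set Xs) : Prop :=
  forall f, F f -> `| condCov (X @^-1` S) (fun w => f (X w)) Y | <= alpha.

Definition multicalibrated_partition (F : set (Xs -> R)) (Y : T -> R)
  (alpha : R) (K : nat) (S : 'I_K -> set Xs) : Prop :=
  [/\ (forall k, measurable (S k)),
      (forall i j, i != j -> S i `&` S j = set0),
      (\bigcup_(k in setT) S k = setT) &
      (forall k, indistinguishable F Y alpha (S k))].
End Defs.

Definition sqloss (R : realType) (d : measure_display) (T : measurableType d)
  (P : probability T R) (K : nat) (Y Yh : T -> R) (J : T -> 'I_K)
  (g b : 'I_K -> R) : R :=
  expect P (fun w => (Y w - g (J w) - b (J w) * Yh w) ^+ 2).

From HB Require Import structures.
From mathcomp Require Import all_boot all_order all_algebra.
From mathcomp Require Import all_classical all_reals all_analysis.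
From mathcomp Require Import ring lra.
Import Order.TTheory GRing.Theory Num.Theory.
Local Open Scope classical_set_scope.
Local Open Scope ring_scope.
Set Implicit Arguments. Unset Strict Implicit.

(** The squared loss is a sum of block losses, so on each block S_k the fitted
   pair (gamma_k, beta_k) does at least as well as any affine predictor
   c + b Yhat.  With b = 4 Cov_k(Y, Yhat) and c matching the means, that
   predictor has block loss
   Var_k Y - 8 Cov_k(Y, Yhat)^2 + 16 Cov_k(Y, Yhat)^2 Var_k Yhat,
   and Var_k Yhat <= 1/4 because Yhat takes values in [0, 1].  Finally, for
   every f, Var_k Y <= E_k[(Y - f(X))^2] + 2 Cov_k(f(X), Y), and the covariance
   is at most alpha by indistinguishability of S_k. *)

(* Integrating against a law of mean m kills the linear term, which gives
   Popoviciu's bound Var <= 1/4 for variables with values in [0, 1]. *)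
Lemma sqr_centered_le_tangent (R : realFieldType) (v m : R) : 0 <= v <= 1 ->
  (v - m) ^+ 2 <= 4^-1 - 2 * (m - 2^-1) * (v - m).
Proof.
move=> /andP[v0 v1].
have := sqr_ge0 (m - 2^-1); nra.
Qed.

Section bounded_random_variables.
Context (R : realType) (d : measure_display) (T : measurableType d)
        (P : probability T R).
Implicit Types (f g : T -> R) (c : R).

Definition bounded_rv (f : T -> R) :=
  measurable_fun setT f /\ exists M : R, forall w, `|f w| <= M.

Lemma bounded_rv_integrable D f : measurable D -> bounded_rv f ->
  P.-integrable D (EFin \o f).
Proof.
move=> mD [mf [M fM]]; apply: measurable_bounded_integrable => //.
- by rewrite (le_lt_trans (probability_le1 P mD)) // ltry.
- exact: measurable_funS mf.
- rewrite /bounded_near; near=> N => w _ /=.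
  by rewrite (le_trans (fM w)) //; near: N; exact: nbhs_pinfty_ge.
Unshelve. all: end_near.
Qed.

Lemma bounded_rv01 f : measurable_fun setT f -> (forall w, 0 <= f w <= 1) ->
  bounded_rv f.
Proof.
move=> mf f01; split=> //; exists 1 => w.
by case/andP: (f01 w) => f0 f1; rewrite ger0_norm.
Qed.

Lemma bounded_rv_cst c : bounded_rv (fun=> c).
Proof. by split; [exact: measurable_cst | exists `|c|]. Qed.

Lemma bounded_rvD f g :
  bounded_rv f -> bounded_rv g -> bounded_rv (fun w => f w + g w).
Proof.
move=> [mf [M fM]] [mg [N gN]].
split; first exact: measurable_realfun.measurable_funD.
by exists (M + N) => w; rewrite (le_trans (ler_normD _ _)) // lerD.
Qed.

Lemma bounded_rvN f : bounded_rv f -> bounded_rv (fun w => - f w).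
Proof.
move=> [mf [M fM]]; split; first exact: measurable_realfun.measurable_funN.
by exists M => w; rewrite normrN.
Qed.

Lemma bounded_rvM f g :
  bounded_rv f -> bounded_rv g -> bounded_rv (fun w => f w * g w).
Proof.
move=> [mf [M fM]] [mg [N gN]].
split; first exact: measurable_realfun.measurable_funM.
exists (M * N) => w; rewrite normrM ler_pM //.
Qed.

Lemma bounded_rvX f n : bounded_rv f -> bounded_rv (fun w => f w ^+ n).
Proof.
move=> bf; elim: n => [|n IHn]; first exact: bounded_rv_cst.
by under eq_fun do rewrite exprS; exact: bounded_rvM.
Qed.

End bounded_random_variables.

Create HintDb bounded_rv.
#[export] Hint Resolve bounded_rv_cst bounded_rvD bounded_rvN bounded_rvM
  bounded_rvX : bounded_rv.
#[export] Hint Extern 0 (bounded_rv _) =>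
  solve [typeclasses eauto 10 with bounded_rv] : core.

Section conditional_expectation.
Context (R : realType) (d : measure_display) (T : measurableType d)
        (P : probability T R) (A : set T) (mA : measurable A).
Implicit Types (f g : T -> R) (c : R).

Definition condVar f := condE P A (fun w => (f w - condE P A f) ^+ 2).

Lemma condED f g : bounded_rv f -> bounded_rv g ->
  condE P A (fun w => f w + g w) = condE P A f + condE P A g.
Proof.
move=> bf bg; rewrite /condE RintegralD ?mulrDl //.
all: exact: bounded_rv_integrable.
Qed.

Lemma condEZ c f :
  bounded_rv f -> condE P A (fun w => c * f w) = c * condE P A f.
Proof.
by move=> bf; rewrite /condE RintegralZl ?mulrA //; exact: bounded_rv_integrable.
Qed.

Lemma ler_condE f g : bounded_rv f -> bounded_rv g -> (forall w, f w <= g w) ->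
  condE P A f <= condE P A g.
Proof.
move=> bf bg fg; rewrite /condE ler_wpM2r ?invr_ge0 ?fine_ge0 //.
by apply: le_Rintegral => //; exact: bounded_rv_integrable.
Qed.

Lemma condE_residual_sqr f g b : bounded_rv f -> bounded_rv g ->
  condE P A (fun w => (f w - (condE P A f - b * condE P A g) - b * g w) ^+ 2)
  = condVar f - 2 * b * condCov P A f g + b ^+ 2 * condVar g.
Proof.
move=> bf bg; rewrite /condVar /condCov.
set mf := condE P A f; set mg := condE P A g.
transitivity (condE P A (fun w => (f w - mf) ^+ 2 +
  ((- (2 * b)) * ((f w - mf) * (g w - mg)) + b ^+ 2 * (g w - mg) ^+ 2))).
  by congr (condE _ _ _); apply/funext => w; ring.
by rewrite !condED ?condEZ // mulNr addrA.
Qed.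

Hypothesis PA_gt0 : (0 < P A)%E.

Lemma condE_cst c : condE P A (fun=> c) = c.
Proof.
rewrite /condE Rintegral_cst // mulfK // gt_eqF // fine_gt0 // PA_gt0 /=.
by rewrite (le_lt_trans (probability_le1 P mA)) // ltry.
Qed.

Lemma condE_centered f :
  bounded_rv f -> condE P A (fun w => f w - condE P A f) = 0.
Proof. by move=> bf; rewrite condED // condE_cst subrr. Qed.

Lemma condVar_le_quarter f :
  measurable_fun setT f -> (forall w, 0 <= f w <= 1) -> condVar f <= 4^-1.
Proof.
move=> mf f01; have bf := bounded_rv01 mf f01.
set m := condE P A f.
have tangent w : (f w - m) ^+ 2 <= 4^-1 + - (2 * (m - 2^-1)) * (f w - m).
  by rewrite mulNr -mulrA mulrA; exact: sqr_centered_le_tangent.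
apply: le_trans (ler_condE _ _ tangent) _ => //.
by rewrite condED // condEZ // condE_cst condE_centered // mulr0 addr0.
Qed.

Lemma condVar_le_sqr_error_condCov f g : bounded_rv f -> bounded_rv g ->
  condVar f <= condE P A (fun w => (f w - g w) ^+ 2) + 2 * condCov P A g f.
Proof.
move=> bf bg; rewrite /condVar /condCov.
set mf := condE P A f; set mg := condE P A g.
have pointwise w : (f w - mf) ^+ 2 <= (f w - g w) ^+ 2 +
    2 * ((g w - mg) * (f w - mf)) + 2 * (mg - mf) * (f w - mf).
  have := sqr_ge0 (g w - mf); nra.
apply: le_trans (ler_condE _ _ pointwise) _ => //.
by rewrite !condED // !condEZ // condE_centered // mulr0 addr0.
Qed.

End conditional_expectation.

Section blockwise_regression.
Context (R : realType) (d : measure_display) (T : measurableType d)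
        (P : probability T R) (K : nat) (A : 'I_K -> set T) (J : T -> 'I_K).
Hypotheses (mA : forall i, measurable (A i))
           (JE : forall w i, J w = i <-> A i w).

Lemma bounded_rv_index (c : 'I_K -> R) : bounded_rv (fun w => c (J w)).
Proof.
have -> : (fun w => c (J w)) = (fun w => \sum_(i < K) c i * (\1_(A i) w : R)).
  apply/funext => w; rewrite (bigD1 (J w)) //= big1 ?addr0.
    by rewrite indicE mem_set ?mulr1 //; apply/JE.
  move=> i /negbTE Jwi; rewrite indicE memNset ?mulr0 // => /JE Ji.
  by rewrite Ji eqxx in Jwi.
split.
  apply: measurable_sum => i; apply: measurable_realfun.measurable_funM.
    exact: measurable_cst.
  exact: measurable_realfun.measurable_indic.
exists (\sum_(i < K) `|c i|) => w.
rewrite (le_trans (ler_norm_sum _ _ _)) // ler_sum // => i _.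
rewrite normrM indicE.
by case: (w \in A i); rewrite ?normr1 ?normr0 ?mulr1 ?mulr0.
Qed.

Variables (Y Yh : T -> R).
Hypotheses (bY : bounded_rv Y) (bYh : bounded_rv Yh).

Lemma sqloss_split (g b : 'I_K -> R) k : sqloss P Y Yh J g b =
  Rintegral P (A k) (fun w => (Y w - g k - b k * Yh w) ^+ 2) +
  Rintegral P (~` A k) (fun w => (Y w - g (J w) - b (J w) * Yh w) ^+ 2).
Proof.
have bJ := bounded_rv_index.
rewrite /sqloss /expect -(setUv (A k)) Rintegral_setU //.
- congr (_ + _); apply: eq_Rintegral => w /set_mem Akw.
  by have -> : J w = k by apply/JE.
- exact: measurableC.
- by rewrite setUv; apply: bounded_rv_integrable.
- exact/disj_setPCl.
Qed.

Lemma sqloss_argmin_block (gs bs : 'I_K -> R) :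
  (forall g b, sqloss P Y Yh J gs bs <= sqloss P Y Yh J g b) ->
  forall k c b,
  condE P (A k) (fun w => (Y w - gs k - bs k * Yh w) ^+ 2)
    <= condE P (A k) (fun w => (Y w - c - b * Yh w) ^+ 2).
Proof.
move=> opt k c b; pose upd (v : 'I_K -> R) x i := if i == k then x else v i.
have off_block (g b' : 'I_K -> R) x y :
    Rintegral P (~` A k)
      (fun w => (Y w - upd g x (J w) - upd b' y (J w) * Yh w) ^+ 2)
    = Rintegral P (~` A k) (fun w => (Y w - g (J w) - b' (J w) * Yh w) ^+ 2).
  apply: eq_Rintegral => w /set_mem Akw.
  by rewrite /upd; have /negbTE -> : J w != k by apply/eqP => /JE.
have := opt (upd gs c) (upd bs b).
rewrite !(sqloss_split _ _ k) off_block /upd eqxx lerD2r => le_int.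
by rewrite /condE ler_wpM2r ?invr_ge0 ?fine_ge0.
Qed.

End blockwise_regression.

Theorem theorem1 (R : realType) (d : measure_display) (T : measurableType d)
  (P : probability T R) (d' : measure_display) (Xs : measurableType d')
  (X : T -> Xs) (Y Yh : T -> R) (F : set (Xs -> R)) (alpha : R) (K : nat)
  (S : 'I_K -> set Xs) (J : T -> 'I_K) (gs bs : 'I_K -> R) :
  measurable_fun setT X -> measurable_fun setT Y -> measurable_fun setT Yh ->
  (forall w, 0 <= Y w <= 1) -> (forall w, 0 <= Yh w <= 1) ->
  (forall f, F f -> measurable_fun setT f /\ (forall x, 0 <= f x <= 1)) ->
  0 <= alpha -> (0 < K)%N ->
  multicalibrated_partition P X F Y alpha S ->
  (forall k, (0 < P (X @^-1` S k))%E) ->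
  (forall w k, J w = k <-> S k (X w)) ->
  (forall g b : 'I_K -> R, sqloss P Y Yh J gs bs <= sqloss P Y Yh J g b) ->
  forall f k, F f ->
    condE P (X @^-1` S k) (fun w => (Y w - gs k - bs k * Yh w) ^+ 2)
      + 4 * (condCov P (X @^-1` S k) Y Yh) ^+ 2
    <= condE P (X @^-1` S k) (fun w => (Y w - f (X w)) ^+ 2) + 2 * alpha.
Proof.
move=> mX mY mYh Y01 Yh01 F01 _ _ [mS _ _ indist] PS_gt0 JE opt f k Ff.
have mA i : measurable (X @^-1` S i) by rewrite -[_ @^-1` _]setTI; exact: mX.
have [mf f01] := F01 f Ff.
have bY := bounded_rv01 mY Y01; have bYh := bounded_rv01 mYh Yh01.
have bfX : bounded_rv (fun w => f (X w)).
  exact: bounded_rv01 (measurableT_comp mf mX) (fun w => f01 (X w)).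
set A := X @^-1` S k; set C := condCov P A Y Yh.
have residual := sqloss_argmin_block mA JE bY bYh opt k
  (condE P A Y - 4 * C * condE P A Yh) (4 * C).
rewrite condE_residual_sqr // -/C in residual.
have varYh := condVar_le_quarter (mA k) (PS_gt0 k) mYh Yh01.
have varY := condVar_le_sqr_error_condCov (mA k) (PS_gt0 k) bY bfX.
have covf : condCov P A (fun w => f (X w)) Y <= alpha.
  exact: le_trans (ler_norm _) (indist k f Ff).
have := ler_wpM2l (sqr_ge0 C) varYh; lra.
Qed.
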